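(* Let $(N_n)_{n\in\mathbb{N}}$ be a strictly increasing sequence of natural numbers and let $f_n:\ell_1\to\mathbb{R}$ be defined as below. Then $\big\|\sum_{i=1}^n f_i \big\|_{FBL[c_0]} \leq 1$ for every $n \in \mathbb{N}$.
   Context: Identify $c_0^*=\ell_1$ and write $x^*=(x^*_1,x^*_2,\ldots)$. For $n<m$ let $g_{nm}: \ell_1 \to [0,1]$ be any continuous function such that $g_{nm}(x^* ) = 0$ if $N_m|x_n^*| \leq |x_m^*|$, $g_{nm}(x^* ) = 1$ if $|x_m^*| \leq (N_m-1)|x_n^*|$, and $g_{nm}(x^* )=g_{nm}(x^*/\|x^*\|)$ whenever $x^* \neq 0$. Define $$f_n(x^* ) = \big(|x_n^*|-N_n\max\{|x_m^*| : m<n\}\big)^+ \cdot \prod_{m > n}g_{nm}(x^* ),$$ where $r^+=\max\{r,0\}$ and the max over the empty set is $0$. For $f:\ell_1\to\mathbb{R}$, $\|f\|_{FBL[c_0]} = \sup \{\sum_{i = 1}^k |f(x_{i}^{*})| : k \in \mathbb{N},\ x_1^{*}, \ldots, x_k^{*} \in \ell_1,\ \sup_{x \in B_{c_0}} \sum_{i=1}^k |x_i^{*}(x)| \leq 1 \}$, the norm of the free Banach lattice $FBL[c_0]$ (the closure in this norm of the vector sublattice of $\mathbb{R}^{\ell_1}$ generated by the evaluations $x^*\mapsto x^*(x)$, $x\in c_0$). *)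

From Stdlib Require Import Reals Lra List.
From Coquelicot Require Import Coquelicot.
Open Scope R_scope.

(* Sequences indexed 0,1,2,... (the paper's 1,2,3,... shifted by one). *)
Definition seqR := nat -> R.

(* membership in l1 (= c_0^* ) *)
Definition in_l1 (x : seqR) : Prop := ex_series (fun j => Rabs (x j)).
Definition l1norm (x : seqR) : R := Series (fun j => Rabs (x j)).

Definition in_c0 (x : seqR) : Prop := is_lim_seq x 0.
Definition in_Bc0 (x : seqR) : Prop := in_c0 x /\ forall j, Rabs (x j) <= 1.

Definition pair (xs x : seqR) : R := Series (fun j => xs j * x j).

Definition l1_continuous_at (g : seqR -> R) (x : seqR) : Prop :=
  forall eps, 0 < eps -> exists delta, 0 < delta /\
    forall y, in_l1 y -> l1norm (fun j => y j - x j) < delta ->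
      Rabs (g y - g x) < eps.

Definition admissible_g (N : nat -> nat) (g : nat -> nat -> seqR -> R) : Prop :=
  forall n m, (n < m)%nat ->
    (forall x, in_l1 x -> 0 <= g n m x <= 1) /\
    (forall x, in_l1 x -> (x n <> 0 \/ x m <> 0) -> l1_continuous_at (g n m) x) /\
    (forall x, in_l1 x -> INR (N m) * Rabs (x n) <= Rabs (x m) -> g n m x = 0) /\
    (forall x, in_l1 x -> x n <> 0 ->
        Rabs (x m) <= (INR (N m) - 1) * Rabs (x n) -> g n m x = 1) /\
    (forall x, in_l1 x -> (exists j, x j <> 0) ->
        g n m x = g n m (fun j => x j / l1norm x)).

(* max{|x_m| : m < n}, with max of the empty set = 0 *)
Definition maxbelow (x : seqR) (n : nat) : R :=
  fold_right Rmax 0 (map (fun m => Rabs (x m)) (seq 0 n)).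

(* infinite product prod_{m > n} g_{nm}(x) := limit of the partial products *)
Definition partial_prod (g : nat -> nat -> seqR -> R) (n : nat) (x : seqR)
  (M : nat) : R :=
  fold_right Rmult 1 (map (fun m => g n m x) (seq (S n) M)).
Definition inf_prod (g : nat -> nat -> seqR -> R) (n : nat) (x : seqR) : R :=
  real (Lim_seq (partial_prod g n x)).

Definition f (N : nat -> nat) (g : nat -> nat -> seqR -> R) (n : nat)
  (x : seqR) : R :=
  Rmax (Rabs (x n) - INR (N n) * maxbelow x n) 0 * inf_prod g n x.

(* sum_{i < n} f_i  (the paper's sum_{i=1}^n f_i) *)
Definition Fsum (N : nat -> nat) (g : nat -> nat -> seqR -> R) (n : nat)
  (x : seqR) : R :=
  fold_right Rplus 0 (map (fun i => f N g i x) (seq 0 n)).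

Definition fbl_admissible (xs : list seqR) : Prop :=
  List.Forall in_l1 xs /\
  forall x, in_Bc0 x ->
    fold_right Rplus 0 (map (fun y => Rabs (pair y x)) xs) <= 1.

Definition fbl_norm (F : seqR -> R) : Rbar :=
  Lub_Rbar (fun r => exists xs, fbl_admissible xs /\
     r = fold_right Rplus 0 (map (fun y => Rabs (F y)) xs)).

(* Each f_k vanishes unless |x_k| > N_k |x_m| for all m < k, and in that case
   g_{ik}(x) = 0 for every i < k kills f_i: at each point at most one f_k is
   nonzero, and 0 <= f_k(x) <= |x_k|.  Hence |sum_{i<n} f_i(y)| <= |y_k| for a
   single k < n, and averaging |y(e)| over the 2^n sign vectors e in B_{c_0}
   supported on {0,...,n-1} dominates every |y_k|, k < n.  For an admissible
   family (y_i), summing over i and exchanging the two finite sums gives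
   sum_i |F(y_i)| <= 2^-n sum_e sum_i |y_i(e)| <= 1. *)
From Pilot Require Import Defs.
From Stdlib Require Import Reals Lra Lia List.
From Coquelicot Require Import Coquelicot.
Open Scope R_scope.

Definition sumR {A : Type} (h : A -> R) (l : list A) : R :=
  fold_right Rplus 0 (map h l).

Lemma sumR_app {A : Type} (h : A -> R) l1 l2 :
  sumR h (l1 ++ l2) = sumR h l1 + sumR h l2.
Proof. unfold sumR; induction l1 as [|a l1 IH]; cbn in *; [ring | rewrite IH; ring]. Qed.

Lemma sumR_map {A B : Type} (h : B -> R) (u : A -> B) l :
  sumR h (map u l) = sumR (fun x => h (u x)) l.
Proof. unfold sumR; now rewrite map_map. Qed.

Lemma sumR_plus {A : Type} (h1 h2 : A -> R) l :
  sumR (fun x => h1 x + h2 x) l = sumR h1 l + sumR h2 l.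
Proof. unfold sumR; induction l as [|a l IH]; cbn in *; [ring | rewrite IH; ring]. Qed.

Lemma sumR_mult_l {A : Type} (h : A -> R) c l : sumR (fun x => c * h x) l = c * sumR h l.
Proof. unfold sumR; induction l as [|a l IH]; cbn in *; [ring | rewrite IH; ring]. Qed.

Lemma sumR_0 {A : Type} (l : list A) : sumR (fun _ => 0) l = 0.
Proof. unfold sumR; induction l as [|a l IH]; cbn in *; [ring | rewrite IH; ring]. Qed.

Lemma sumR_le {A : Type} (h1 h2 : A -> R) l :
  (forall x, In x l -> h1 x <= h2 x) -> sumR h1 l <= sumR h2 l.
Proof.
  induction l as [|a l IH]; intros H; cbn; [lra|].
  apply Rplus_le_compat; [apply H; now left | apply IH; intros; apply H; now right].
Qed.

Lemma sumR_ext {A : Type} (h1 h2 : A -> R) l :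
  (forall x, In x l -> h1 x = h2 x) -> sumR h1 l = sumR h2 l.
Proof. intros H; apply Rle_antisym; apply sumR_le; intros x Hx; rewrite H; auto; lra. Qed.

Lemma sumR_swap {A B : Type} (H : A -> B -> R) l1 l2 :
  sumR (fun x => sumR (H x) l2) l1 = sumR (fun y => sumR (fun x => H x y) l1) l2.
Proof.
  induction l1 as [|a l1 IH]; [symmetry; apply sumR_0|].
  change (sumR (H a) l2 + sumR (fun x => sumR (H x) l2) l1 =
          sumR (fun y => H a y + sumR (fun x => H x y) l1) l2).
  rewrite IH; symmetry; apply (sumR_plus (H a)).
Qed.

Lemma sumR_seq_S (u : nat -> R) n :
  sumR u (seq 0 (S n)) = sumR u (seq 0 n) + u n.
Proof. rewrite seq_S, sumR_app; cbn; ring. Qed.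

Lemma sumR_seq_ext (u v : nat -> R) n :
  (forall j, (j < n)%nat -> u j = v j) -> sumR u (seq 0 n) = sumR v (seq 0 n).
Proof. intros H; apply sumR_ext; intros j Hj; apply in_seq in Hj; apply H; lia. Qed.

Lemma Series_finite_support (u : nat -> R) n :
  (forall j, (n <= j)%nat -> u j = 0) -> Series u = sumR u (seq 0 n).
Proof.
  intros Hu.
  assert (Hpart : forall k, sum_n u k = sumR u (seq 0 (S k))).
  { induction k as [|k IH].
    - rewrite sum_O; cbn; ring.
    - rewrite sum_Sn, IH, (sumR_seq_S u (S k)); reflexivity. }
  assert (Htail : forall d, sumR u (seq 0 (n + d)) = sumR u (seq 0 n)).
  { induction d as [|d IH]; [now rewrite Nat.add_0_r|].
    rewrite Nat.add_succ_r, sumR_seq_S, IH, Hu by lia; ring. }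
  unfold Series; rewrite (Lim_seq_ext_loc _ (fun _ => sumR u (seq 0 n))).
  - now rewrite Lim_seq_const.
  - exists n; intros k Hk.
    rewrite Hpart, <- (Htail (S k - n)%nat); f_equal; f_equal; lia.
Qed.

Definition upd (n : nat) (v : R) (e : seqR) : seqR :=
  fun j => if Nat.eqb j n then v else e j.

Fixpoint signs (n : nat) : list seqR :=
  match n with
  | 0%nat => (fun _ => 0) :: nil
  | S n => map (upd n 1) (signs n) ++ map (upd n (-1)) (signs n)
  end.

Lemma sumR_signs_const n c : sumR (fun _ => c) (signs n) = 2 ^ n * c.
Proof.
  induction n as [|n IH]; cbn [signs]; [cbn; ring|].
  rewrite sumR_app, !sumR_map, IH; cbn; ring.
Qed.

Lemma signs_support n e : In e (signs n) ->
  (forall j, (n <= j)%nat -> e j = 0) /\ (forall j, Rabs (e j) <= 1).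
Proof.
  revert e; induction n as [|n IH]; intros e He; cbn in He.
  - destruct He as [<- | []]; split; intros; rewrite ?Rabs_R0; lra.
  - apply in_app_iff in He.
    destruct He as [He | He]; apply in_map_iff in He; destruct He as [e0 [<- He0]];
      destruct (IH e0 He0) as [Hsupp Hbnd]; split; intros j; unfold upd;
      destruct (Nat.eqb_spec j n) as [-> | Hjn].
    all: try (intros; lia); try (intros; apply Hsupp; lia); try apply Hbnd.
    all: unfold Rabs; destruct Rcase_abs; lra.
Qed.

Lemma signs_in_Bc0 n e : In e (signs n) -> in_Bc0 e.
Proof.
  intros He; destruct (signs_support n e He) as [Hsupp Hbnd]; split; auto.
  apply (is_lim_seq_ext_loc (fun _ => 0)); [|apply is_lim_seq_const].
  exists n; intros j Hj; symmetry; auto.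
Qed.

Lemma pair_signs y n e : In e (signs n) ->
  pair y e = sumR (fun j => y j * e j) (seq 0 n).
Proof.
  intros He; apply Series_finite_support; intros j Hj.
  rewrite (proj1 (signs_support n e He) j Hj); ring.
Qed.

(* Generalised over [c] so that fixing the last sign yields the induction hypothesis. *)
Lemma sumR_signs_abs_ge n : forall (a : seqR) c k, (k < n)%nat ->
  2 ^ n * Rabs (a k) <=
  sumR (fun e => Rabs (c + sumR (fun j => a j * e j) (seq 0 n))) (signs n).
Proof.
  induction n as [|n IH]; intros a c k Hk; [lia|].
  assert (Hupd : forall v e,
    Rabs (c + sumR (fun j => a j * upd n v e j) (seq 0 (S n))) =
    Rabs ((c + a n * v) + sumR (fun j => a j * e j) (seq 0 n))).
  { intros v e; rewrite sumR_seq_S.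
    rewrite (sumR_seq_ext _ (fun j => a j * e j)).
    - unfold upd; rewrite Nat.eqb_refl; f_equal; ring.
    - intros j Hj; unfold upd; replace (Nat.eqb j n) with false; auto.
      symmetry; apply Nat.eqb_neq; lia. }
  cbn [signs]; rewrite sumR_app, !sumR_map.
  rewrite (sumR_ext _ _ _ (fun e _ => Hupd 1 e)),
    (sumR_ext _ _ _ (fun e _ => Hupd (-1) e)).
  destruct (Nat.eq_dec k n) as [-> | Hkn].
  - rewrite <- sumR_plus.
    apply Rle_trans with (sumR (fun _ => 2 * Rabs (a n)) (signs n)).
    + rewrite sumR_signs_const; cbn; lra.
    + apply sumR_le; intros e _.
      set (L := sumR (fun j => a j * e j) (seq 0 n)).
      unfold Rabs; repeat destruct Rcase_abs; lra.
  - replace (2 ^ S n * Rabs (a k)) with (2 ^ n * Rabs (a k) + 2 ^ n * Rabs (a k))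
      by (cbn; ring).
    apply Rplus_le_compat; apply IH; lia.
Qed.

Lemma pair_signs_abs_ge y n k : (k < n)%nat ->
  2 ^ n * Rabs (y k) <= sumR (fun e => Rabs (pair y e)) (signs n).
Proof.
  intros Hk.
  rewrite (sumR_ext _ (fun e => Rabs (0 + sumR (fun j => y j * e j) (seq 0 n)))).
  - apply (sumR_signs_abs_ge n y 0 k Hk).
  - intros e He; rewrite (pair_signs y n e He); f_equal; ring.
Qed.

Lemma fbl_norm_le_1_of_signs (F : seqR -> R) n :
  (forall y, in_l1 y ->
     2 ^ n * Rabs (F y) <= sumR (fun e => Rabs (pair y e)) (signs n)) ->
  Rbar_le (fbl_norm F) 1.
Proof.
  intros HF; unfold fbl_norm.
  apply (proj2 (Lub_Rbar_correct _)); intros r [xs [[Hl1 Hadm] ->]]; cbn.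
  change (sumR (fun y => Rabs (F y)) xs <= 1).
  rewrite Forall_forall in Hl1.
  assert (Hpow : 0 < 2 ^ n) by (apply pow_lt; lra).
  enough (2 ^ n * sumR (fun y => Rabs (F y)) xs <= 2 ^ n * 1) by nra.
  rewrite <- sumR_mult_l.
  apply Rle_trans with (sumR (fun y => sumR (fun e => Rabs (pair y e)) (signs n)) xs).
  { apply sumR_le; intros y Hy; apply HF, Hl1, Hy. }
  rewrite sumR_swap, <- sumR_signs_const.
  apply sumR_le; intros e He; apply Hadm, (signs_in_Bc0 n), He.
Qed.

Lemma fold_Rmax_ge l a : In a l -> a <= fold_right Rmax 0 l.
Proof.
  induction l as [|b l IH]; intros H; [destruct H|].
  destruct H as [<- | H]; [apply Rmax_l | eapply Rle_trans; [apply IH, H | apply Rmax_r]].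
Qed.

Lemma fold_Rmax_ge0 l : 0 <= fold_right Rmax 0 l.
Proof.
  induction l as [|b l IH]; cbn; [lra | eapply Rle_trans; [apply IH | apply Rmax_r]].
Qed.

Lemma maxbelow_ge x n i : (i < n)%nat -> Rabs (x i) <= maxbelow x n.
Proof.
  intros Hi; apply fold_Rmax_ge, in_map_iff; exists i; split; auto.
  apply in_seq; lia.
Qed.

Lemma fold_Rmult_bounds (h : nat -> R) l :
  (forall m, In m l -> 0 <= h m <= 1) -> 0 <= fold_right Rmult 1 (map h l) <= 1.
Proof.
  induction l as [|a l IH]; cbn; intros H; [lra|].
  pose proof (H a (or_introl eq_refl)).
  pose proof (IH (fun m Hm => H m (or_intror Hm))); split; nra.
Qed.

Lemma fold_Rmult_eq0 (h : nat -> R) l m :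
  In m l -> h m = 0 -> fold_right Rmult 1 (map h l) = 0.
Proof.
  induction l as [|a l IH]; cbn; intros Hm H0; [destruct Hm|].
  destruct Hm as [<- | Hm]; [rewrite H0 | rewrite IH]; auto; ring.
Qed.

Section Functions_f.
Variables (N : nat -> nat) (g : nat -> nat -> seqR -> R).
Hypothesis Hg : admissible_g N g.

Lemma inf_prod_bounds n x : in_l1 x -> 0 <= inf_prod g n x <= 1.
Proof.
  intros Hx.
  assert (Hpart : forall M, 0 <= partial_prod g n x M <= 1).
  { intros M; apply fold_Rmult_bounds; intros m Hm; apply in_seq in Hm.
    apply (proj1 (Hg n m ltac:(lia))), Hx. }
  assert (Hup : Rbar_le (Lim_seq (partial_prod g n x)) 1).
  { rewrite <- (Lim_seq_const 1); apply Lim_seq_le_loc; exists 0%nat; intros; apply Hpart. }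
  assert (Hlow : Rbar_le 0 (Lim_seq (partial_prod g n x))).
  { rewrite <- (Lim_seq_const 0); apply Lim_seq_le_loc; exists 0%nat; intros; apply Hpart. }
  unfold inf_prod; destruct (Lim_seq (partial_prod g n x)); cbn in *; lra.
Qed.

Lemma inf_prod_eq0 n k x : (n < k)%nat -> g n k x = 0 -> inf_prod g n x = 0.
Proof.
  intros Hk H0; unfold inf_prod.
  rewrite (Lim_seq_ext_loc _ (fun _ => 0)), Lim_seq_const; [reflexivity|].
  exists (k - n)%nat; intros M HM; apply (fold_Rmult_eq0 _ _ k); auto.
  apply in_seq; lia.
Qed.

Lemma f_bounds i x : in_l1 x -> 0 <= Defs.f N g i x <= Rabs (x i).
Proof.
  intros Hx; unfold Defs.f; pose proof (inf_prod_bounds i x Hx).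
  assert (0 <= INR (N i) * maxbelow x i)
    by (apply Rmult_le_pos; [apply pos_INR | apply fold_Rmax_ge0]).
  assert (0 <= Rmax (Rabs (x i) - INR (N i) * maxbelow x i) 0) by apply Rmax_r.
  assert (Rmax (Rabs (x i) - INR (N i) * maxbelow x i) 0 <= Rabs (x i))
    by (apply Rmax_lub; [lra | apply Rabs_pos]).
  split; nra.
Qed.

Lemma f_disjoint i k x :
  in_l1 x -> (i < k)%nat -> 0 < Defs.f N g k x -> Defs.f N g i x = 0.
Proof.
  intros Hx Hik Hpos; unfold Defs.f in Hpos.
  assert (Hlead : INR (N k) * maxbelow x k < Rabs (x k)).
  { destruct (Rle_dec (Rabs (x k) - INR (N k) * maxbelow x k) 0) as [Hle|]; [|lra].
    rewrite Rmax_right in Hpos; lra. }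
  assert (INR (N k) * Rabs (x i) <= INR (N k) * maxbelow x k)
    by (apply Rmult_le_compat_l; [apply pos_INR | apply maxbelow_ge, Hik]).
  assert (Hgik : g i k x = 0) by (apply (proj1 (proj2 (proj2 (Hg i k Hik)))); auto; lra).
  unfold Defs.f; rewrite (inf_prod_eq0 i k x Hik Hgik); ring.
Qed.

Lemma Fsum_single n x : in_l1 x ->
  Fsum N g n x = 0 \/ exists2 k, (k < n)%nat & Fsum N g n x = Defs.f N g k x.
Proof.
  intros Hx; induction n as [|n IH]; [now left|].
  change (Fsum N g (S n) x) with (sumR (fun i => Defs.f N g i x) (seq 0 (S n))).
  rewrite sumR_seq_S; change (sumR _ (seq 0 n)) with (Fsum N g n x).
  destruct (Req_dec (Defs.f N g n x) 0) as [Hn | Hn].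
  - rewrite Hn, Rplus_0_r.
    destruct IH as [IH | [k Hk IH]]; [now left | right; exists k; auto].
  - assert (Hpos : 0 < Defs.f N g n x) by (pose proof (f_bounds n x Hx); lra).
    right; exists n; [lia|].
    destruct IH as [IH | [k Hk IH]]; rewrite IH; [|rewrite (f_disjoint k n x)]; auto; ring.
Qed.

Lemma Fsum_signs_bound n y : in_l1 y ->
  2 ^ n * Rabs (Fsum N g n y) <= sumR (fun e => Rabs (pair y e)) (signs n).
Proof.
  intros Hy; destruct (Fsum_single n y Hy) as [H0 | [k Hk Hf]].
  - rewrite H0, Rabs_R0, Rmult_0_r, <- (sumR_0 (signs n)).
    apply sumR_le; intros; apply Rabs_pos.
  - eapply Rle_trans; [|apply (pair_signs_abs_ge y n k Hk)].
    pose proof (f_bounds k y Hy).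
    apply Rmult_le_compat_l; [apply pow_le; lra|].
    rewrite Hf, Rabs_right by lra; lra.
Qed.

End Functions_f.

Theorem mainTheorem9 (N : nat -> nat) (g : nat -> nat -> seqR -> R)
  (HN : forall i j, (i < j)%nat -> (N i < N j)%nat)
  (Hg : admissible_g N g) :
  forall n : nat, Rbar_le (fbl_norm (Fsum N g n)) 1.
Proof.
  intros n; apply (fbl_norm_le_1_of_signs _ n), Fsum_signs_bound, Hg.
Qed.
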